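(* Let $G$ be a compact group and $\alpha$ an automorphism of $G$ such that $(G,\alpha)$ is topologically transitive and has finite depth. Let $V$ be an open normal subgroup of $G$ with $\bigcap_{k\in\mathbb{Z}}\alpha^k(V)=\{1\}$ and $V=V_+V_-$. Then (1) there is $k\in\mathbb{N}$ such that $\alpha^k(V_+)V_-=G$; and (2) $\bigcup_{n\in\mathbb{N}}\big(\alpha^n(V_+)\cap\alpha^{-n}(V_-)\big)$ is dense in $G$.
   Context: $V_+=\bigcap_{k\ge0}\alpha^k(V)$, $V_-=\bigcap_{k\ge0}\alpha^{-k}(V)$. $(G,\alpha)$ is topologically transitive if some orbit $\{\alpha^n(x):n\in\mathbb{Z}\}$ is dense in $G$; it has finite depth if there is an open subgroup $U\le G$ with $\bigcap_{k\in\mathbb{Z}}\alpha^k(U)=\{1\}$. *)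

(* an abstract (possibly non-abelian) topological
   group is given by a carrier topologicalType T and explicit operations. *)
From mathcomp Require Import all_boot all_algebra.
From mathcomp Require Import all_classical all_reals all_analysis.
Set Implicit Arguments. Unset Strict Implicit. Unset Printing Implicit Defensive.
Local Open Scope classical_set_scope.

Section TopGroup.
Context {T : topologicalType}.
Variables (mul : T -> T -> T) (inv : T -> T) (one : T).

Definition group_axioms : Prop :=
  [/\ forall x y z, mul x (mul y z) = mul (mul x y) z,
      forall x, mul one x = x, forall x, mul x one = x,
      forall x, mul (inv x) x = one & forall x, mul x (inv x) = one].

Definition topological_group : Prop :=
  group_axioms /\
  continuous (fun p : T * T => mul p.1 p.2) /\ continuous inv.

Definition compact_group : Prop :=
  topological_group /\ compact [set: T] /\ hausdorff_space T.

Definition is_subgroup (H : set T) : Prop :=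
  [/\ H one, forall x y, H x -> H y -> H (mul x y) & forall x, H x -> H (inv x)].

Definition is_normal (H : set T) : Prop :=
  is_subgroup H /\ forall g h, H h -> H (mul (mul g h) (inv g)).

Definition setmul (A B : set T) : set T :=
  [set z | exists a b, [/\ A a, B b & z = mul a b]].

Definition top_automorphism (alpha : T -> T) : Prop :=
  [/\ forall x y, alpha (mul x y) = mul (alpha x) (alpha y),
      continuous alpha &
      exists beta : T -> T,
        [/\ cancel alpha beta, cancel beta alpha & continuous beta]].

(* alpha^k(A) for k an integer; for negative k this is the image under
   alpha^{-1}, i.e. the preimage under alpha^{|k|} (alpha is bijective). *)
Definition apow (alpha : T -> T) (k : int) (A : set T) : set T :=
  match k with
  | Posz n => iter n alpha @` A
  | Negz n => iter n.+1 alpha @^-1` A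
  end.

Definition Vplus (alpha : T -> T) (V : set T) : set T :=
  \bigcap_(k in [set: nat]) apow alpha (Posz k) V.
Definition Vminus (alpha : T -> T) (V : set T) : set T :=
  \bigcap_(k in [set: nat]) apow alpha (- Posz k)%R V.

Definition orbit (alpha : T -> T) (x : T) : set T :=
  \bigcup_(n in [set: int]) apow alpha n [set x].

Definition top_transitive (alpha : T -> T) : Prop :=
  exists x, dense (orbit alpha x).

Definition finite_depth (alpha : T -> T) : Prop :=
  exists U : set T, [/\ open U, is_subgroup U &
    \bigcap_(k in [set: int]) apow alpha k U = [set one]].

End TopGroup.

From Pilot Require Import Defs.
From mathcomp Require Import all_boot all_algebra.
From mathcomp Require Import all_classical all_reals all_analysis.
From mathcomp Require Import zify.
Local Open Scope classical_set_scope.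

(* Write W_n for alpha^n(V_+) alpha^-n(V_-).  Since alpha^-n(V_-) is normal
   and V = V_+ V_-, each W_n is a subgroup containing the open set alpha^-n(V),
   so the W_n form an increasing chain of open subgroups.  Their union is an
   open, hence closed, alpha-invariant subgroup; it meets a dense orbit, so it
   is all of G, and by compactness W_n0 = G for some n0.  Applying this to
   alpha^-n0(g) gives (1).  For (2), compactness and
   cap_k alpha^k(V) = 1 make the sets cap_{|k| <= m} alpha^k(V) a basis of
   neighbourhoods of 1; decomposing alpha^(n0+m)(u) and alpha^-(n0+m)(v)
   through W_n0 = G writes any g = uv as s h t with s, t in such a
   neighbourhood and h in alpha^N(V_+) cap alpha^-N(V_-). *)

Lemma compact_increasing_cover (T : topologicalType) (F : nat -> set T) :
  compact [set: T] -> (forall n, open (F n)) ->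
  {homo F : n m / (n <= m)%N >-> n `<=` m} -> (forall x, exists n, F n x) ->
  exists n, F n = [set: T].
Proof.
move=> /compact_near_coveringP cT oF mF Fcover.
have [N _ FN] : \forall n \near \oo, [set: T] `<=` F n.
  apply: cT => x _; have [n Fnx] := Fcover x.
  exists (F n, [set i | (n <= i)%N]) => /=.
    by split; [exact: open_nbhs_nbhs | exists n].
  by move=> [y i] [/= Fny ni]; exact: mF ni _ Fny.
by exists N; apply/seteqP; split => //; exact: (FN N (leqnn N)).
Qed.

Lemma compact_decreasing_closed_sub (T : topologicalType) (F : nat -> set T)
    (U : set T) :
  compact [set: T] -> (forall n, closed (F n)) ->
  {homo F : n m / (n <= m)%N >-> m `<=` n} ->
  \bigcap_(n in [set: nat]) F n `<=` U -> open U -> exists n, F n `<=` U.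
Proof.
move=> cT cF mF FU oU.
have [n Fn] : exists n, ~` F n `|` U = [set: T].
  apply: compact_increasing_cover => // [n|n m nm x|x].
  - by apply: openU => //; exact: closed_openC.
  - by case=> [nFx|Ux]; [left => Fx; apply/nFx/(mF _ _ nm) | right].
  - have [Ux|nUx] := pselect (U x); first by exists 0%N; right.
    have [n nFx] : exists n, ~ F n x.
      by apply/existsNP => Fx; apply/nUx/FU => n _; exact: Fx.
    by exists n; left.
exists n => x Fx; have : (~` F n `|` U) x by rewrite Fn.
by case.
Qed.

Section Iterates.
Context {T : Type} {f g : T -> T} (fK : cancel f g).

Lemma iter_can n : cancel (iter n f) (iter n g).
Proof. by elim: n => // n IH x; rewrite iterSr iterS fK IH. Qed.

Lemma iter_can_geq {k n x} : (n <= k)%N -> iter k g (iter n f x) = iter (k - n) g x.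
Proof. by move=> nk; rewrite -{1}(subnK nk) iterD iter_can. Qed.

Lemma iter_can_leq {k n x} : (k <= n)%N -> iter k g (iter n f x) = iter (n - k) f x.
Proof. by move=> kn; rewrite -{1}(subnKC kn) iterD iter_can. Qed.

End Iterates.

Lemma iter_continuous (T : topologicalType) (f : T -> T) n :
  continuous f -> continuous (iter n f).
Proof.
move=> fc; elim: n => [|n IH] x /=; first exact: cvg_id.
exact: (continuous_comp (IH x) (fc _)).
Qed.

Lemma orbit_iter {T : topologicalType} {alpha : T -> T} {x y : T} :
  Defs.orbit alpha x y -> exists n, y = iter n alpha x \/ iter n alpha y = x.
Proof.
case=> -[n|n] _ /=; first by case=> _ -> <-; exists n; left.
by move=> e; exists n.+1; right.
Qed.

Lemma invariant_clopen_setT {T : topologicalType} {alpha : T -> T} {x0 : T}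
    {H : set T} :
  dense (Defs.orbit alpha x0) -> open H -> closed H -> H !=set0 ->
  alpha @^-1` H = H -> H = [set: T].
Proof.
move=> dx oH cH H0 Hinv.
have Hiter n x : H (iter n alpha x) = H x.
  elim: n x => // n IH x; rewrite iterSr IH; by rewrite -{2}Hinv.
have Hx0 : H x0.
  have [y [Hy Oy]] := dx H H0 oH.
  have [n [e|<-]] := orbit_iter Oy; last by rewrite Hiter.
  by rewrite -(Hiter n) -e.
apply/seteqP; split => // z _; apply: contrapT => nHz.
have [y [nHy Oy]] := dx (~` H) (ex_intro _ z nHz) (closed_openC cH).
apply: nHy; have [n [->|e]] := orbit_iter Oy; first by rewrite Hiter.
by rewrite -(Hiter n) e.
Qed.

(* [tail alpha^-1 V n] is alpha^n(V_+) and [tail alpha V n] is alpha^-n(V_-). *)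
Definition tail {T : Type} (f : T -> T) (V : set T) (n : nat) : set T :=
  \bigcap_(k in [set k | (n <= k)%N]) iter k f @^-1` V.

Lemma tail_mono {T : Type} {f : T -> T} {V : set T} {n m : nat} :
  (n <= m)%N -> tail f V n `<=` tail f V m.
Proof. by move=> nm x h k mk; apply: h; exact: leq_trans mk. Qed.

Section TailIterates.
Context {T : Type} {f g : T -> T} {V : set T} {n : nat}.

Lemma tail_iter c {x} : tail f V n x -> tail f V (n - c) (iter c f x).
Proof. by move=> h k /= nk; rewrite -iterD; apply: h => /=; lia. Qed.

Lemma tail_iterV c {x} : cancel g f ->
  tail f V n x -> tail f V (n + c) (iter c g x).
Proof.
by move=> gK h k /= nk; rewrite (iter_can_geq gK); [apply: h => /=|]; lia.
Qed.

Lemma tail_iter_head {c k x} : cancel f g ->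
  tail f V n x -> (k + n <= c)%N -> V (iter k g (iter c f x)).
Proof.
by move=> fK h kc; rewrite (iter_can_leq fK); [apply: h => /=|]; lia.
Qed.

End TailIterates.

Section GroupTheory.
Context {T : topologicalType} {mul : T -> T -> T} {inv : T -> T} {one : T}.
Hypothesis hG : group_axioms mul inv one.
Local Notation is_subgroup := (is_subgroup mul inv one).
Local Notation is_normal := (is_normal mul inv one).
Local Notation setmul := (setmul mul).

Lemma mulgA x y z : mul x (mul y z) = mul (mul x y) z.
Proof. by case: hG. Qed.
Lemma mul1g x : mul one x = x.
Proof. by case: hG. Qed.
Lemma mulg1 x : mul x one = x.
Proof. by case: hG. Qed.
Lemma mulVg x : mul (inv x) x = one.
Proof. by case: hG. Qed.
Lemma mulgV x : mul x (inv x) = one.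
Proof. by case: hG. Qed.

Lemma mulKg x y : mul (inv x) (mul x y) = y.
Proof. by rewrite mulgA mulVg mul1g. Qed.
Lemma mulKVg x y : mul x (mul (inv x) y) = y.
Proof. by rewrite mulgA mulgV mul1g. Qed.
Lemma mulgK x y : mul (mul y x) (inv x) = y.
Proof. by rewrite -mulgA mulgV mulg1. Qed.

Lemma invg_unique x y : mul x y = one -> inv x = y.
Proof. by move=> xy1; rewrite -[inv x]mulg1 -xy1 mulKg. Qed.
Lemma invgK x : inv (inv x) = x.
Proof. by apply: invg_unique; rewrite mulVg. Qed.
Lemma invgM x y : inv (mul x y) = mul (inv y) (inv x).
Proof. by apply: invg_unique; rewrite -mulgA (mulgA y) mulgV mul1g mulgV. Qed.

Section Morphism.
Context {f : T -> T} (f_morph : {morph f : x y / mul x y}).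

Lemma morph1 : f one = one.
Proof.
have f11 : mul (f one) (f one) = f one by rewrite -f_morph mul1g.
by rewrite -[LHS](mulKg (f one)) f11 mulVg.
Qed.

Lemma morphV : {morph f : x / inv x}.
Proof. by move=> x; apply/esym/invg_unique; rewrite -f_morph mulgV morph1. Qed.

Lemma iter_morph n : {morph iter n f : x y / mul x y}.
Proof. by elim: n => // n IH x y; rewrite !iterS IH f_morph. Qed.

Lemma preimage_morph_normal {H} : is_normal H -> is_normal (f @^-1` H).
Proof.
case=> -[H1 HM HV] Hconj; split; first split => /=.
- by rewrite morph1.
- by move=> x y Hx Hy; rewrite f_morph; exact: HM.
- by move=> x Hx; rewrite morphV; exact: HV.
- by move=> g h Hh; rewrite /= !f_morph morphV; exact: Hconj.
Qed.

End Morphism.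

Lemma bigcap_normal (I : Type) (D : set I) (F : I -> set T) :
  (forall i, D i -> is_normal (F i)) -> is_normal (\bigcap_(i in D) F i).
Proof.
move=> FN; split; first split.
- by move=> i Di; have [[]] := FN i Di.
- move=> x y Fx Fy i Di; have [[_ M _] _] := FN i Di.
  by apply: M; [exact: Fx|exact: Fy].
- by move=> x Fx i Di; have [[_ _ Vi] _] := FN i Di; apply: Vi; exact: Fx.
- by move=> g h Fh i Di; have [_ C] := FN i Di; apply: C; exact: Fh.
Qed.

Lemma setI_normal A B : is_normal A -> is_normal B -> is_normal (A `&` B).
Proof.
move=> [[A1 AM AV] Ac] [[B1 BM BV] Bc]; split; first split => //.
- by move=> x y [Ax Bx] [Ay By]; split; [exact: AM|exact: BM].
- by move=> x [Ax Bx]; split; [exact: AV|exact: BV].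
- by move=> g h [Ah Bh]; split; [exact: Ac|exact: Bc].
Qed.

Lemma setmul_normal_subgroup H L :
  is_subgroup H -> is_normal L -> is_subgroup (setmul H L).
Proof.
move=> [H1 HM HV] [[L1 LM LV] Lc]; split.
- by exists one, one; rewrite mul1g.
- move=> _ _ [u [v [Hu Lv ->]]] [u' [v' [Hu' Lv' ->]]].
  exists (mul u u'), (mul (mul (mul (inv u') v) (inv (inv u'))) v'); split.
  + exact: HM.
  + by apply: LM => //; exact: Lc.
  + by rewrite invgK -!mulgA mulKVg.
- move=> _ [u [v [Hu Lv ->]]].
  exists (inv u), (mul (mul u (inv v)) (inv u)); split.
  + exact: HV.
  + by apply: Lc; exact: LV.
  + by rewrite invgM -mulgA mulKg.
Qed.

Lemma bigcup_increasing_subgroup (F : nat -> set T) :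
  (forall n, is_subgroup (F n)) -> {homo F : n m / (n <= m)%N >-> n `<=` m} ->
  is_subgroup (\bigcup_(n in [set: nat]) F n).
Proof.
move=> FS mF; split.
- by exists 0%N => //; case: (FS 0%N).
- move=> x y [n _ Fx] [m _ Fy]; exists (maxn n m) => //.
  case: (FS (maxn n m)) => _ M _; apply: M.
  + exact: (mF _ _ (leq_maxl n m)).
  + exact: (mF _ _ (leq_maxr n m)).
- by move=> x [n _ Fx]; exists n => //; case: (FS n) => _ _; apply.
Qed.

Hypothesis mul_cont : continuous (fun p : T * T => mul p.1 p.2).

Lemma continuous_mull c : continuous (mul c).
Proof.
move=> x; apply: (@continuous_comp _ _ _ (pair c) (fun p : T * T => mul p.1 p.2)).
  by apply: cvg_pair; [exact: cvg_cst|exact: cvg_id].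
exact: mul_cont.
Qed.

Lemma continuous_mulr c : continuous (mul^~ c).
Proof.
move=> x; apply: (@continuous_comp _ _ _ (pair^~ c) (fun p : T * T => mul p.1 p.2)).
  by apply: cvg_pair; [exact: cvg_id|exact: cvg_cst].
exact: mul_cont.
Qed.

Lemma open_lmul_preimage x (A : set T) : open A -> open (mul x @^-1` A).
Proof. by move=> oA; apply: open_comp => // y _; exact: continuous_mull. Qed.

Lemma subgroup_nbhs1_open {H A} :
  is_subgroup H -> open A -> A one -> A `<=` H -> open H.
Proof.
move=> [_ HM HV] oA A1 AH; rewrite openE => x Hx.
apply: (@filterS _ _ _ (mul (inv x) @^-1` A)).
  by move=> y /AH Hy; rewrite -(mulKVg x y); exact: HM.
by apply: open_nbhs_nbhs; split; [exact: open_lmul_preimage|rewrite /= mulVg].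
Qed.

Lemma open_subgroup_closed {H} : is_subgroup H -> open H -> closed H.
Proof.
move=> [H1 HM HV] oH; rewrite -openC openE => x nHx.
apply: (@filterS _ _ _ (mul (inv x) @^-1` H)).
  move=> y Hy Hy'; apply: nHx.
  by have := HM _ _ Hy' (HV _ Hy); rewrite invgM invgK mulKVg.
by apply: open_nbhs_nbhs; split; [exact: open_lmul_preimage|rewrite /= mulVg].
Qed.

Section Automorphism.
Variables (a b : T -> T) (V : set T).
Hypotheses (a_morph : {morph a : x y / mul x y}).
Hypotheses (abK : cancel a b) (baK : cancel b a).
Hypotheses (a_cont : continuous a) (b_cont : continuous b).
Hypotheses (V_open : open V) (V_normal : is_normal V).

Lemma b_morph : {morph b : x y / mul x y}.
Proof. by move=> x y; apply: (can_inj abK); rewrite a_morph !baK. Qed.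

Lemma tail_normal {f : T -> T} n :
  {morph f : x y / mul x y} -> is_normal (tail f V n).
Proof.
move=> f_morph; apply: bigcap_normal => k _.
exact/preimage_morph_normal/V_normal/iter_morph.
Qed.

Definition W n := setmul (tail b V n) (tail a V n).

Lemma W_subgroup n : is_subgroup (W n).
Proof.
apply: setmul_normal_subgroup; first by case: (tail_normal n b_morph).
exact: tail_normal.
Qed.

Lemma W_mono : {homo W : n m / (n <= m)%N >-> n `<=` m}.
Proof.
move=> n m nm _ [u [v [Hu Lv ->]]]; exists u, v.
by split => //; [exact: tail_mono nm _ Hu|exact: tail_mono nm _ Lv].
Qed.

Lemma W_iter {n} k {x} : W n x -> W (n + k) (iter k a x).
Proof.
move=> [u [v [Hu Lv ->]]]; exists (iter k a u), (iter k a v); split.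
- exact: tail_iterV.
- by apply: tail_mono _ _ (tail_iter k Lv); lia.
- exact: iter_morph.
Qed.

Lemma W_iterV {n} k {x} : W n x -> W (n + k) (iter k b x).
Proof.
move=> [u [v [Hu Lv ->]]]; exists (iter k b u), (iter k b v); split.
- by apply: tail_mono _ _ (tail_iter k Hu); lia.
- exact: tail_iterV.
- exact/iter_morph/b_morph.
Qed.

Hypothesis V_sub_W0 : V `<=` W 0.

Lemma iter_preimage_sub_W n : iter n a @^-1` V `<=` W n.
Proof.
move=> x /V_sub_W0 [p [q [Hp Lq e]]].
exists (iter n b p), (iter n b q); split.
- by apply: tail_mono _ _ (tail_iter n Hp); lia.
- exact: (tail_iterV n baK Lq).
- by rewrite -(iter_morph b_morph) -e iter_can.
Qed.

Lemma W_open n : open (W n).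
Proof.
apply: (subgroup_nbhs1_open (W_subgroup n) _ _ (iter_preimage_sub_W n)).
- by apply: open_comp => // x _; exact: iter_continuous.
- by rewrite /= (morph1 (iter_morph a_morph n)); case: V_normal => -[].
Qed.

Hypotheses (T_compact : compact [set: T]) (a_transitive : top_transitive a).

Lemma exists_W_setT : exists n, W n = [set: T].
Proof.
apply: compact_increasing_cover => //; [exact: W_open|exact: W_mono|].
have [x0 dense_orbit] := a_transitive.
pose H := \bigcup_(n in [set: nat]) W n.
have H_subgroup : is_subgroup H.
  by apply: bigcup_increasing_subgroup; [exact: W_subgroup|exact: W_mono].
have H_open : open H by apply: bigcup_open => n _; exact: W_open.
suff H_setT : H = [set: T].
  move=> x; have [n _ Wx] : H x by rewrite H_setT.
  by exists n.
apply: (invariant_clopen_setT dense_orbit H_open).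
- exact: open_subgroup_closed.
- by exists one; case: H_subgroup.
- apply/seteqP; split => x [n _ Wx]; exists n.+1 => //.
    by rewrite -(abK x) -addn1; exact: (W_iterV 1 Wx).
  by rewrite -addn1; exact: (W_iter 1 Wx).
Qed.

Lemma setmul_tail_setT :
  exists k, setmul (tail b V k) (tail a V 0) = [set: T].
Proof.
have [n Wn] := exists_W_setT; exists (n + n); apply/seteqP; split => // y _.
have [u [v [Hu Lv e]]] : W n (iter n b y) by rewrite Wn.
exists (iter n a u), (iter n a v); split.
- exact: tail_iterV.
- by have := tail_iter n Lv; rewrite subnn.
- by rewrite -(iter_morph a_morph) -e iter_can.
Qed.

Definition Vcap m :=
  \bigcap_(k in [set k | (k <= m)%N]) (iter k a @^-1` V `&` iter k b @^-1` V).

Lemma Vcap_normal m : is_normal (Vcap m).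
Proof.
apply: bigcap_normal => k _.
by apply: setI_normal; apply: preimage_morph_normal V_normal; apply: iter_morph;
  [exact: a_morph|exact: b_morph].
Qed.

Lemma Vcap_iter {m c n x} : (n + m <= c)%N -> tail a V n x -> Vcap m (iter c a x).
Proof.
move=> nmc Lx k /= km; split.
- by apply: (tail_iter c Lx) => /=; lia.
- by apply: (tail_iter_head abK Lx); lia.
Qed.

Lemma Vcap_iterV {m c n x} : (n + m <= c)%N -> tail b V n x -> Vcap m (iter c b x).
Proof.
move=> nmc Hx k /= km; split.
- by apply: (tail_iter_head baK Hx); lia.
- by apply: (tail_iter c Hx) => /=; lia.
Qed.

Hypothesis V_cap : tail b V 0 `&` tail a V 0 `<=` [set one].

Lemma Vcap_nbhs1 U : open U -> U one -> exists m, Vcap m `<=` U.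
Proof.
move=> oU U1; apply: compact_decreasing_closed_sub => //.
- have V_closed : closed V.
    by case: V_normal => V_sub _; exact: open_subgroup_closed.
  move=> m; apply: closed_bigI => k _.
  by apply: closedI; apply: preimage_closed => // x _; exact: iter_continuous.
- by move=> n m nm x Cx k km; apply: Cx; exact: leq_trans km nm.
- move=> x Cx; suff -> : x = one by [].
  by apply: V_cap; split => k _; have [] := Cx k I k (leqnn k).
Qed.

Section SplitFromCover.
Context {n0 : nat}.
Hypothesis W_setT : W n0 = [set: T].

Lemma tail_split_l m {u} : tail b V n0 u ->
  exists s y, [/\ Vcap m s, tail b V n0 y, tail a V (n0 + (n0 + m)) y & u = mul s y].
Proof.
move=> Hu; set c := (n0 + m)%N.
have [p [q [Hp Lq e]]] : W n0 (iter c a u) by rewrite W_setT.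
have eu : u = mul (iter c b p) (iter c b q).
  by rewrite -(iter_morph b_morph) -e iter_can.
have [[_ HM HV] _] := tail_normal n0 b_morph.
exists (iter c b p), (iter c b q); split => //.
- exact: Vcap_iterV (leqnn c) Hp.
- have -> : iter c b q = mul (inv (iter c b p)) u by rewrite eu mulKg.
  apply: HM Hu; apply: HV; apply: tail_mono _ _ (tail_iter c Hp); lia.
- exact: (tail_iterV c baK Lq).
Qed.

Lemma tail_split_r m {v} : tail a V n0 v ->
  exists y t, [/\ Vcap m t, tail b V (n0 + (n0 + m)) y, tail a V n0 y & v = mul y t].
Proof.
move=> Lv; set c := (n0 + m)%N.
have [p [q [Hp Lq e]]] : W n0 (iter c b v) by rewrite W_setT.
have ev : v = mul (iter c a p) (iter c a q).
  by rewrite -(iter_morph a_morph) -e iter_can.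
have [[_ LM LV] _] := tail_normal n0 a_morph.
exists (iter c a p), (iter c a q); split => //.
- exact: Vcap_iter (leqnn c) Lq.
- exact: (tail_iterV c abK Hp).
- have -> : iter c a p = mul v (inv (iter c a q)) by rewrite ev mulgK.
  apply: LM Lv _; apply: LV; apply: tail_mono _ _ (tail_iter c Lq); lia.
Qed.

Lemma Vcap_factor m g : exists s t h, [/\ Vcap m s, Vcap m t,
  exists N, tail b V N h /\ tail a V N h & g = mul s (mul h t)].
Proof.
have [u [v [Hu Lv ->]]] : W n0 g by rewrite W_setT.
have [s [y [Cs Hy Ly ->]]] := tail_split_l m Hu.
have [y' [t [Ct Hy' Ly' ->]]] := tail_split_r m Lv.
exists s, t, (mul y y'); split => //; last by rewrite -!mulgA.
have [[_ HM _] _] := tail_normal (n0 + (n0 + m)) b_morph.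
have [[_ LM _] _] := tail_normal (n0 + (n0 + m)) a_morph.
exists (n0 + (n0 + m))%N; split.
- by apply: HM Hy'; apply: tail_mono _ _ Hy; lia.
- by apply: LM Ly _; apply: tail_mono _ _ Ly'; lia.
Qed.

End SplitFromCover.

Lemma dense_bigcup_tailI :
  dense (\bigcup_(n in [set: nat]) (tail b V n `&` tail a V n)).
Proof.
move=> O [g Og] oO.
have [n0 Wn0] := exists_W_setT.
have [m Cm] : exists m, Vcap m `<=` mul^~ g @^-1` O.
  apply: Vcap_nbhs1; last by rewrite /= mul1g.
  by apply: open_comp => // x _; exact: continuous_mulr.
have [s [t [h [Cs Ct [N NH] eg]]]] := Vcap_factor Wn0 m g.
exists h; split; last by exists N.
have eh : h = mul (mul (inv s) g) (inv t) by rewrite eg mulKg mulgK.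
have [[_ CM CV] Cconj] := Vcap_normal m.
have /Cm : Vcap m (mul h (inv g)).
  have -> : mul h (inv g) = mul (inv s) (mul (mul g (inv t)) (inv g)).
    by rewrite eh -!mulgA.
  by apply: CM; [exact: CV|apply: Cconj; exact: CV].
by rewrite /= -mulgA mulVg mulg1.
Qed.

End Automorphism.
End GroupTheory.

Lemma apow_Vminus {T : topologicalType} (alpha : T -> T) (V : set T) n :
  apow alpha (- Posz n)%R (Vminus alpha V) = tail alpha V n.
Proof.
have apowN k A : apow alpha (- Posz k)%R A = iter k alpha @^-1` A.
  by case: k => [|k]; [rewrite GRing.oppr0 /= image_id|rewrite -NegzE].
apply/seteqP; split => x; rewrite apowN => Lx k.
- move=> /= nk; rewrite -(subnK nk) iterD.
  by have := Lx (k - n)%N I; rewrite apowN.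
- by move=> _; rewrite apowN /= -iterD; apply: Lx => /=; lia.
Qed.

Section AutomorphismPowers.
Context {T : topologicalType} {alpha beta : T -> T}.
Hypotheses (abK : cancel alpha beta) (baK : cancel beta alpha).
Variable V : set T.

Lemma apow_Vplus n : apow alpha (Posz n) (Vplus alpha V) = tail beta V n.
Proof.
apply/seteqP; split => [_ [x Px <-] k /= nk|x Hx].
  rewrite (iter_can_geq abK nk); have [y Vy <-] := Px (k - n)%N I.
  by rewrite iter_can.
exists (iter n beta x); last exact: iter_can.
move=> k _; exists (iter k beta (iter n beta x)); last exact: iter_can.
by rewrite -iterD; apply: Hx => /=; lia.
Qed.

Lemma tailI_sub_bigcap_apow :
  tail beta V 0 `&` tail alpha V 0 `<=` \bigcap_(k in [set: int]) apow alpha k V.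
Proof.
move=> x [Hx Lx] [n|n] _; last exact: (Lx n.+1 (leq0n _)).
by exists (iter n beta x); [apply: Hx|exact: iter_can].
Qed.

End AutomorphismPowers.

Theorem proposition5p8 (T : topologicalType)
  (mul : T -> T -> T) (inv : T -> T) (one : T) (alpha : T -> T)
  (hG : compact_group mul inv one)
  (halpha : top_automorphism mul alpha)
  (htrans : top_transitive alpha)
  (hdepth : finite_depth mul inv one alpha)
  (V : set T)
  (hVopen : open V) (hVnormal : is_normal mul inv one V)
  (hVcap : \bigcap_(k in [set: int]) apow alpha k V = [set one])
  (hVprod : V = setmul mul (Vplus alpha V) (Vminus alpha V)) :
  (exists k : nat,
      setmul mul (apow alpha (Posz k) (Vplus alpha V)) (Vminus alpha V) = [set: T])
  /\ dense (\bigcup_(n in [set: nat])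
              (apow alpha (Posz n) (Vplus alpha V)
               `&` apow alpha (- Posz n)%R (Vminus alpha V))).
Proof.
case: hG => -[hgrp [mul_cont _]] [T_compact _].
case: halpha => a_morph a_cont [beta [abK baK b_cont]].
have Vplus_tail : Vplus alpha V = tail beta V 0.
  by rewrite -(apow_Vplus abK baK) /= image_id.
have Vminus_tail : Vminus alpha V = tail alpha V 0.
  by rewrite -apow_Vminus GRing.oppr0 /= image_id.
have V_sub_W0 : V `<=` setmul mul (tail beta V 0) (tail alpha V 0).
  by rewrite -Vplus_tail -Vminus_tail -hVprod.
have V_cap : tail beta V 0 `&` tail alpha V 0 `<=` [set one].
  by rewrite -hVcap; exact: tailI_sub_bigcap_apow.
split.
  have [k k_cover] := setmul_tail_setT hgrp mul_cont alpha beta V a_morph abK baK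
    a_cont hVopen hVnormal V_sub_W0 T_compact htrans.
  by exists k; rewrite (apow_Vplus abK baK) Vminus_tail.
under eq_bigcupr do rewrite (apow_Vplus abK baK) apow_Vminus.
exact: (dense_bigcup_tailI hgrp mul_cont alpha beta V a_morph abK baK a_cont
  b_cont hVopen hVnormal V_sub_W0 T_compact htrans V_cap).
Qed.
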